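(* For every integer $k \ge 4$, $\gamma(k) \ge 5\cdot 2^{k-2} - 1$.
   Context: For words $C,S$, $C$ is an \emph{s-cover} of $S$ if for every position $i$ of $S$ there exist indices $j_0<\dots<j_{|C|-1}$ with $S[j_t]=C[t]$ for all $t$ and $i\in\{j_0,\dots,j_{|C|-1}\}$. An s-cover $C$ of $S$ is \emph{non-trivial} if $|C|<|S|$; a word is \emph{s-primitive} if it has no non-trivial s-cover. $\gamma(k)$ is the maximum length of an s-primitive word over an alphabet of size $k$. *)

From mathcomp Require Import all_boot.
Set Implicit Arguments. Unset Strict Implicit. Unset Printing Implicit Defensive.

Definition occ_through {T : eqType} (C S : seq T) (i : nat) : Prop :=
  exists j : nat -> nat,
    (forall t, t.+1 < size C -> j t < j t.+1) /\
    (forall t, t < size C -> j t < size S) /\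
    (forall t, t < size C -> forall x0 : T, nth x0 S (j t) = nth x0 C t) /\
    (exists2 t, t < size C & j t = i).

Definition s_cover {T : eqType} (C S : seq T) : Prop :=
  forall i, i < size S -> occ_through C S i.

Definition s_primitive {T : eqType} (S : seq T) : Prop :=
  forall C : seq T, s_cover C S -> ~ (size C < size S).

From mathcomp Require Import all_boot zify.
Set Implicit Arguments. Unset Strict Implicit. Unset Printing Implicit Defensive.

(* An s-cover C of S ++ a :: S must match some letter C[t0] = a to the middle
   position, and since a occurs nowhere else, every occurrence of C sends t0
   there.  Hence take t0 C covers the first copy of S and drop t0.+1 C the
   second, so |C| >= 2|S| + 1 when S is s-primitive.  Starting from an
   s-primitive word of length 19 over four letters, verified by exhaustive
   search among its subsequences (every s-cover is one), k - 4 doublings with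
   fresh letters give length 5 * 2^(k-2) - 1. *)

Section Embedding.
Variable T : eqType.
Implicit Types (C S : seq T) (j : nat -> nat).

Definition embedding C S j : Prop :=
  [/\ forall t, t.+1 < size C -> j t < j t.+1,
      forall t, t < size C -> j t < size S &
      forall t, t < size C -> forall x0 : T, nth x0 S (j t) = nth x0 C t].

Lemma occ_throughP C S i :
  occ_through C S i <-> exists2 j, embedding C S j & exists2 t, t < size C & j t = i.
Proof.
split; first by case=> j [? [? [? ?]]]; exists j.
by case=> j [? ? ?] ?; exists j.
Qed.

Lemma embedding_mono C S j :
  embedding C S j -> {in gtn (size C) &, {mono j : a b / a < b}}.
Proof.
case=> j_incr _ _; apply/leqW_mono_in/leq_mono_in.
apply: (@homo_ltn_in _ (gtn (size C))); first exact: ltn_trans.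
  by move=> a b _ bC c /andP[_ cb]; rewrite inE (ltn_trans cb).
by move=> t _; rewrite inE; apply: j_incr.
Qed.

Lemma embedding_take C S j t n :
  embedding C S j -> (forall u, u < t -> u < size C -> j u < n) ->
  embedding (take t C) (take n S) j.
Proof.
case=> j_incr j_lt j_nth jn; split=> u; rewrite !size_take_min => uC.
- by apply: j_incr; lia.
- by have := j_lt u; have := jn u; lia.
- move=> x0; have ut : u < t by lia.
  by rewrite !nth_take ?j_nth ?jn //; lia.
Qed.

Lemma embedding_drop C S j t n :
  embedding C S j -> (forall u, t <= u -> u < size C -> n <= j u) ->
  embedding (drop t C) (drop n S) (fun u => j (t + u) - n).
Proof.
case=> j_incr j_lt j_nth nj; split=> u; rewrite !size_drop => uC.
- have := nj (t + u); have := j_incr (t + u); rewrite addnS; lia.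
- have := nj (t + u); have := j_lt (t + u); lia.
- move=> x0; have nju := nj (t + u) (leq_addr _ _) ltac:(lia).
  by rewrite !nth_drop subnKC // j_nth //; lia.
Qed.

Lemma embedding_subseq C S j : embedding C S j -> subseq C S.
Proof.
elim: C S j => [|c C IH] S j jE; first exact: sub0seq.
case: (jE) => _ j_lt j_nth.
have j0S : j 0 < size S by apply: j_lt.
rewrite -(cat_take_drop (j 0) S); apply: subseq_trans (suffix_subseq _ _).
rewrite (drop_nth c j0S) (j_nth 0 erefl) /= eqxx.
have := embedding_drop (t := 1) (n := (j 0).+1) jE; rewrite /= drop0 => jE'.
apply: IH (jE' _) => u u1 uC.
by rewrite (embedding_mono jE) ?inE.
Qed.

End Embedding.

Section Cover.
Variable T : eqType.
Implicit Types (C S : seq T) (j : nat -> nat).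

Lemma s_cover_subseq C S : 0 < size S -> s_cover C S -> subseq C S.
Proof. by move=> S0 /(_ 0 S0) /occ_throughP [j /embedding_subseq]. Qed.

Variables (C S : seq T) (t0 p : nat).
Hypothesis t0C : t0 < size C.
Hypothesis pinned : forall j, embedding C S j -> j t0 = p.

Lemma s_cover_take : s_cover C S -> s_cover (take t0 C) (take p S).
Proof.
move=> cover i; rewrite size_take_min => ip.
have /occ_throughP [j jE [t tC jt]] := cover i ltac:(lia).
have jt0 := pinned jE.
have tt0 : t < t0 by rewrite -(embedding_mono jE) ?inE // jt jt0; lia.
apply/occ_throughP; exists j; last by exists t; rewrite ?size_takel; lia.
by apply: (embedding_take jE) => u ut uC; rewrite -jt0 (embedding_mono jE) ?inE.
Qed.

Lemma s_cover_drop : s_cover C S -> s_cover (drop t0.+1 C) (drop p.+1 S).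
Proof.
move=> cover i; rewrite size_drop => ip.
have /occ_throughP [j jE [t tC jt]] := cover (p.+1 + i) ltac:(lia).
have jt0 := pinned jE.
have t0t : t0 < t by rewrite -(embedding_mono jE) ?inE // jt jt0; lia.
apply/occ_throughP; exists (fun u => j (t0.+1 + u) - p.+1).
  by apply: (embedding_drop jE) => u ut uC; rewrite -jt0 (embedding_mono jE) ?inE.
by exists (t - t0.+1); rewrite ?size_drop ?subnKC ?jt; lia.
Qed.

End Cover.

Lemma nth_cat_cons_notin (T : eqType) (a : T) (S : seq T) m :
  a \notin S -> m < (size S + size S).+1 -> nth a (S ++ a :: S) m = a -> m = size S.
Proof.
move=> aS mS; rewrite nth_cat; case: ltnP => [mlt | mge].
  by move=> Sm; move: aS; rewrite -Sm mem_nth.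
case Em: (m - size S) => [|m'] /=; first lia.
by move=> Sm; move: aS; rewrite -Sm mem_nth //; lia.
Qed.

Lemma s_primitive_cat_cons (T : eqType) (a : T) (S : seq T) :
  a \notin S -> s_primitive S -> s_primitive (S ++ a :: S).
Proof.
move=> aS primS C cover; rewrite size_cat /= addnS => ltC.
have /occ_throughP [j0 [_ _ j0_nth] [t0 t0C j0t0]] :=
  cover (size S) ltac:(rewrite size_cat /=; lia).
have Ct0 : nth a C t0 = a by rewrite -j0_nth // j0t0 nth_cat ltnn subnn.
have pinned j : embedding C (S ++ a :: S) j -> j t0 = size S.
  case=> _ j_lt j_nth; apply: (nth_cat_cons_notin aS).
    by have := j_lt t0 t0C; rewrite size_cat /= addnS.
  by rewrite j_nth.
have := s_cover_take t0C pinned cover; rewrite take_size_cat // => /primS.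
have := s_cover_drop t0C pinned cover; rewrite -cat_rcons -(size_rcons S a) drop_size_cat //.
move=> /primS; rewrite size_take_min size_drop; lia.
Qed.

Lemma s_primitive_map (T U : eqType) (f : T -> U) (g : U -> T) (S : seq T) :
  {in S, cancel f g} -> s_primitive S -> s_primitive (map f S).
Proof.
move=> fK primS C cover; rewrite size_map => ltC.
apply: (primS (map g C)); last by rewrite size_map.
move=> i iS; have /occ_throughP [j [j_incr j_lt j_nth] jt] := cover i ltac:(by rewrite size_map).
apply/occ_throughP; exists j; last by rewrite size_map.
have j_ltS t : t < size C -> j t < size S by rewrite -(size_map f); apply: j_lt.
split; rewrite size_map; [exact: j_incr | exact: j_ltS | move=> t tC x0].
rewrite (nth_map (f x0)) // -(j_nth t tC) (nth_map x0) ?j_ltS //.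
by rewrite fK ?mem_nth ?j_ltS.
Qed.

Section Decision.
Variables (T : eqType) (x0 : T).

(* Written with find and nested if-then-else instead of has, all, && and ||,
   whose arguments vm_compute evaluates strictly: the exhaustive search below
   relies on short-circuiting. *)
Definition occurs_atb (C S : seq T) (i : nat) : bool :=
  find (fun t => if nth x0 C t == nth x0 S i then
                   if subseq (take t C) (take i S) then subseq (drop t.+1 C) (drop i.+1 S)
                   else false
                 else false) (iota 0 (size C)) < size C.

Lemma occurs_atbP C S i : occ_through C S i -> occurs_atb C S i.
Proof.
case/occ_throughP=> j jE [t tC <-].
rewrite /occurs_atb -{2}(size_iota 0 (size C)) -has_find; apply/hasP.
exists t; first by rewrite mem_iota.
have jmono := embedding_mono jE; case: (jE) => _ _ ->//.
rewrite eqxx (embedding_subseq (embedding_take jE _)); last first.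
  by move=> u ut uC; rewrite jmono ?inE.
rewrite (embedding_subseq (embedding_drop jE _)) // => u ut uC.
by rewrite jmono ?inE.
Qed.

Fixpoint all_bitseqs (n : nat) (P : bitseq -> bool) : bool :=
  if n is n'.+1 then
    if all_bitseqs n' (fun m => P (true :: m)) then all_bitseqs n' (fun m => P (false :: m))
    else false
  else P [::].

Lemma all_bitseqsP n P : all_bitseqs n P -> forall m, size m = n -> P m.
Proof.
elim: n P => [|n IH] P /=; first by move=> PS [].
by case Pt: all_bitseqs => // Pf [//|[] m [sm]]; [apply: IH Pt _ sm | apply: IH Pf _ sm].
Qed.

Definition s_primitiveb (pos : seq nat) (S : seq T) : bool :=
  all_bitseqs (size S) (fun m =>
    if size (mask m S) < size S then
      find (fun i => ~~ occurs_atb (mask m S) S i) pos < size pos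
    else true).

Lemma s_primitiveb_sound pos S :
  all (gtn (size S)) pos -> s_primitiveb pos S -> s_primitive S.
Proof.
move=> posS test C cover ltC.
have /subseqP [m sm defC] := s_cover_subseq (leq_ltn_trans (leq0n _) ltC) cover.
have := all_bitseqsP test sm; rewrite -defC ltC -has_find => /hasP [i ipos].
by rewrite occurs_atbP //; apply/cover/(allP posS).
Qed.

End Decision.

Definition base_word : seq nat := [:: 0; 1; 0; 2; 0; 3; 1; 0; 1; 3; 2; 0; 1; 2; 1; 0; 3; 0; 2].

Lemma s_primitive_base_word : s_primitive base_word.
Proof.
(* Positions are tested from the middle outwards, where most candidates fail
   first; the order only affects the running time. *)
apply: (s_primitiveb_sound (x0 := 0)
  (pos := [:: 9; 10; 8; 11; 7; 12; 6; 13; 5; 14; 4; 15; 3; 16; 2; 17; 1; 18; 0])).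
  by [].
by vm_compute.
Qed.

Fixpoint doubled_word (n : nat) : seq nat :=
  if n is n'.+1 then doubled_word n' ++ (n' + 4) :: doubled_word n' else base_word.

Lemma doubled_word_lt n x : x \in doubled_word n -> x < n + 4.
Proof.
elim: n x => [|n IH] x /=; first by move: x; apply/allP.
by rewrite mem_cat inE => /or3P [/IH | /eqP-> | /IH]; lia.
Qed.

Lemma size_doubled_word n : (size (doubled_word n)).+1 = 5 * 2 ^ n.+2.
Proof. by elim: n => [//|n IH] /=; rewrite size_cat /= expnS; lia. Qed.

Lemma s_primitive_doubled_word n : s_primitive (doubled_word n).
Proof.
elim: n => [|n IH] /=; first exact: s_primitive_base_word.
by apply: s_primitive_cat_cons => //; apply/negP => /doubled_word_lt; lia.
Qed.

Theorem mainTheorem2 (k : nat) : 4 <= k ->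
  exists S : seq 'I_k, s_primitive S /\ 5 * 2 ^ (k - 2) - 1 <= size S.
Proof.
move=> k4; have k0 : 0 < k by lia.
exists (map (insubd (Ordinal k0)) (doubled_word (k - 4))); split.
  apply: (s_primitive_map (g := val)); last exact: s_primitive_doubled_word.
  by move=> x /doubled_word_lt xk; rewrite val_insubd ifT //; lia.
have := size_doubled_word (k - 4); rewrite size_map (_ : (k - 4).+2 = k - 2); lia.
Qed.
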